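(* Let $F=\sum_{g\ge 0}\lambda^{2g-2}F_g(p_1,p_2,\dots;s,u,v)$ be the dessin free energy (defined in the context), and define the genus zero one-point function $$G_{0,1}(x)=\sum_{m\ge 1} m\,\frac{\partial F_0}{\partial p_m}\Big|_{p_k=0,\,k\ge1}\, x^{-m-1}.$$ Then $G_{0,1}$ satisfies $G_{0,1}(x)=\frac{suv}{x^2}+\frac{s(u+v)}{x}G_{0,1}(x)+sG_{0,1}(x)^2$, and $$G_{0,1}(x)=\frac{1}{2s}\Big(1-\frac{s(u+v)}{x}-\sqrt{1-\frac{2s(u+v)}{x}+\frac{s^2(u-v)^2}{x^2}}\Big)=\sum_{n\ge1}\frac{s^n}{x^{n+1}}\sum_{k=1}^n\frac1n\binom{n}{k}\binom{n}{k-1}u^{n+1-k}v^k,$$ where the square root is the formal power series in $x^{-1}$ with constant term $1$. Equivalently, the coefficient of $x^{-n-1}$ is $s^n u^{n+1}N_n(v/u)$, where $N_n(q)=\sum_{k=1}^n N_{n,k}q^k$ is the $n$-th Narayana polynomial, $N_{n,k}=\frac1n\binom nk\binom n{k-1}$.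
   Context: Let $s,u,v$ be parameters and $\lambda$ a genus-tracking parameter. For $n\ge0$ define the dessin Virasoro operators $$L_n=-\frac{n+1}{s}\frac{\partial}{\partial p_{n+1}}+(u+v)n\frac{\partial}{\partial p_n}+\sum_{j\ge1}p_j(n+j)\frac{\partial}{\partial p_{n+j}}+\lambda^2\sum_{i+j=n,\ i,j\ge1}ij\frac{\partial^2}{\partial p_i\partial p_j}+\delta_{n,0}\,uv\,\lambda^{-2}.$$ The dessin free energy $F=\sum_{g\ge0}\lambda^{2g-2}F_g$ (the logarithm of the Kazarian–Zograf generating series of Grothendieck's dessins d'enfants, with $F_g$ formal power series in $p_1,p_2,\dots$ vanishing at $p=0$) is characterized by $L_n e^{F}=0$ for all $n\ge0$. In genus zero this means: for all $n\ge0$, $(u+v)n\,\partial_{p_n}F_0+\sum_{j\ge1}(p_j-\delta_{j,1}/s)(n+j)\partial_{p_{n+j}}F_0+\sum_{i+j=n}ij\,\partial_{p_i}F_0\,\partial_{p_j}F_0+\delta_{n,0}uv=0$. *)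

From mathcomp Require Import all_boot all_order all_algebra.
Set Implicit Arguments. Unset Strict Implicit. Unset Printing Implicit Defensive.
Import Order.TTheory GRing.Theory Num.Theory.
Local Open Scope ring_scope.

(* A monomial p_1^{e_0} p_2^{e_1} ... is encoded by its exponent list  *)
(* e : seq nat (e`_(k-1) = exponent of p_k); trailing zeros are        *)
(* irrelevant: every coefficient is read through [trim].               *)

Fixpoint trim (e : seq nat) : seq nat :=
  match e with
  | [::] => [::]
  | a :: r => let r' := trim r in
              if (a == 0%N) && (r' == [::]) then [::] else a :: r'
  end.

Definition expo (e : seq nat) (k : nat) : nat := nth 0%N e k.-1.

Definition unitm (k : nat) : seq nat := rcons (nseq k.-1 0%N) 1%N.

Definition addm (e f : seq nat) : seq nat :=
  mkseq (fun i => (nth 0 e i + nth 0 f i)%N) (maxn (size e) (size f)).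
Definition subm (e f : seq nat) : seq nat :=
  mkseq (fun i => (nth 0 e i - nth 0 f i)%N) (maxn (size e) (size f)).

Fixpoint subvecs (e : seq nat) : seq (seq nat) :=
  match e with
  | [::] => [:: [::]]
  | m :: r => [seq k :: a | k <- iota 0 m.+1, a <- subvecs r]
  end.

Section FPS.
Variable R : fieldType.

Definition fps := seq nat -> R.

Definition coef (F : fps) (e : seq nat) : R := F (trim e).

Definition dp (k : nat) (F : fps) : fps :=
  fun e => (expo e k).+1%:R * coef F (addm e (unitm k)).

Definition mulp (j : nat) (F : fps) : fps :=
  fun e => if (0 < expo e j)%N then coef F (subm e (unitm j)) else 0.

Definition fmul (F G : fps) : fps :=
  fun e => \sum_(a <- subvecs e) coef F a * coef G (subm e a).

(* coefficient of p^e in the left-hand side of the genus-zero equation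
   (u+v) n d_{p_n}F0 + sum_{j>=1} (p_j - delta_{j,1}/s)(n+j) d_{p_{n+j}}F0
     + sum_{i+j=n, i,j>=1} i j d_{p_i}F0 d_{p_j}F0 + delta_{n,0} u v.
   The infinite sum over j is locally finite: at the monomial e only the
   j with p_j | p^e, i.e. 1 <= j <= size e, contribute. *)
Definition genus0_lhs (s u v : R) (F : fps) (n : nat) (e : seq nat) : R :=
  (u + v) * n%:R * dp n F e
  + \sum_(1 <= j < (size e).+1) (n + j)%:R * mulp j (dp (n + j) F) e
  - s^-1 * (n + 1)%:R * dp (n + 1) F e
  + \sum_(1 <= i < n) (i * (n - i))%:R * fmul (dp i F) (dp (n - i) F) e
  + (if (n == 0%N) && (trim e == [::]) then u * v else 0).

Definition genus0_free_energy (s u v : R) (F : fps) : Prop :=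
  coef F [::] = 0 /\ forall (n : nat) (e : seq nat), genus0_lhs s u v F n e = 0.

(* Univariate formal power series in y = x^{-1}: A k = coeff of y^k.   *)
Definition ps := nat -> R.
Definition psmul (A B : ps) : ps := fun k => \sum_(i < k.+1) A i * B (k - i)%N.

Definition G01 (F : fps) : ps :=
  fun k => if k is m.+2 then m.+1%:R * dp m.+1 F [::] else 0.

Definition narayana (n k : nat) : R := n%:R^-1 * ('C(n, k) * 'C(n, k.-1))%:R.
Definition narayana_poly (n : nat) (q : R) : R :=
  \sum_(1 <= k < n.+1) narayana n k * q ^+ k.

End FPS.

From mathcomp Require Import all_boot all_order all_algebra.
From mathcomp Require Import ring zify.
Import Order.TTheory GRing.Theory Num.Theory.
Local Open Scope ring_scope.
Set Implicit Arguments. Unset Strict Implicit. Unset Printing Implicit Defensive.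

(* At p = 0 the genus-zero constraints only involve the numbers dF0/dp_m(0),
   and they say that G = G_{0,1}, as a series in y = 1/x, solves the quadratic
   G = s u v y^2 + s (u+v) y G + s G^2.  Hence T = 1 - s (u+v) y - 2 s G squares
   to P = 1 - 2 s (u+v) y + s^2 (u-v)^2 y^2, and square roots with constant term
   1 are unique.  Differentiating T^2 = P gives 2 P T' = P' T, which is the
   three-term recurrence
     (n+3) G_(n+3) = (2n+3) s (u+v) G_(n+2) - n s^2 (u-v)^2 G_(n+1);
   the Narayana sums satisfy the same recurrence (a coefficientwise binomial
   identity) and have the same first two terms. *)

Section PowerSeries.
Variable R : fieldType.
Implicit Types (A B C S T : ps R) (a b c : R).

Definition psXn (j : nat) : ps R := fun i => (i == j)%:R.
Definition psshift A : ps R := fun k => if k is k'.+1 then A k' else 0.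
Definition psderiv A : ps R := fun k => k.+1%:R * A k.+1.
Definition psquad a b c : ps R :=
  fun i => a * psXn 0 i + b * psXn 1 i + c * psXn 2 i.

Lemma psmulE A B k : psmul A B k = \sum_(0 <= i < k.+1) A i * B (k - i)%N.
Proof. by rewrite big_mkord. Qed.

Lemma psmulC A B k : psmul A B k = psmul B A k.
Proof.
rewrite !psmulE big_nat_rev /=; apply: eq_big_nat => i /andP[_ hi].
by rewrite add0n subSS subKn // mulrC.
Qed.

Lemma eq_psmul A A' B B' k : A =1 A' -> B =1 B' -> psmul A B k = psmul A' B' k.
Proof. by move=> eA eB; apply: eq_bigr => i _; rewrite eA eB. Qed.

Lemma psmulDl A B C k : psmul (fun i => A i + B i) C k = psmul A C k + psmul B C k.
Proof. by rewrite /psmul -big_split; apply: eq_bigr => i _; rewrite mulrDl. Qed.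

Lemma psmulZl a A C k : psmul (fun i => a * A i) C k = a * psmul A C k.
Proof. by rewrite /psmul mulr_sumr; apply: eq_bigr => i _; rewrite mulrA. Qed.

Lemma psmulZr a A C k : psmul A (fun i => a * C i) k = a * psmul A C k.
Proof. by rewrite psmulC psmulZl psmulC. Qed.

Lemma psmulXnl j A k : psmul (psXn j) A k = if (j <= k)%N then A (k - j)%N else 0.
Proof.
rewrite psmulE; case: leqP => [hjk | hkj].
  rewrite (bigD1_seq j) ?mem_iota ?iota_uniq //=.
  rewrite /psXn eqxx mul1r big1 ?addr0 // => i /negbTE ->; exact: mul0r.
by rewrite big1_seq // => i /andP[_]; rewrite mem_iota /psXn => /andP[_ hi];
  rewrite (ltn_eqF (leq_trans hi hkj)) mul0r.
Qed.

Lemma psmul_quadl a b c A k :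
  psmul (psquad a b c) A k = a * A k + b * psshift A k + c * psshift (psshift A) k.
Proof.
rewrite !psmulDl !psmulZl !psmulXnl.
by case: k => [|[|k]]; rewrite /= ?subSS ?subn0.
Qed.

Lemma psderiv_quad a b c : psderiv (psquad a b c) =1 psquad b (c *+ 2) 0.
Proof.
by case=> [|[|[|k]]]; rewrite /psderiv /psquad /psXn /=; ring.
Qed.

(* Associativity and the Leibniz rule are inherited from polynomials through
   truncation. *)
Definition pstrunc (N : nat) A : {poly R} := \poly_(i < N) A i.

Lemma psmul_coefM N A B k : (k < N)%N -> psmul A B k = (pstrunc N A * pstrunc N B)`_k.
Proof.
move=> ltkN; rewrite coefM; apply: eq_bigr => i _.
have ltiN : (i < N)%N by apply: leq_ltn_trans ltkN; rewrite -ltnS.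
by rewrite !coef_poly ltiN (leq_ltn_trans (leq_subr _ _) ltkN).
Qed.

Lemma psmulA A B C k : psmul (psmul A B) C k = psmul A (psmul B C) k.
Proof.
pose t := pstrunc k.+1.
have psmul_t D E i : (i <= k)%N -> psmul D E i = (t D * t E)`_i.
  by move=> hi; apply: psmul_coefM.
have coef_t D i : (i <= k)%N -> D i = (t D)`_i by move=> hi; rewrite coef_poly ltnS hi.
transitivity ((t A * t B * t C)`_k); last rewrite -mulrA.
  rewrite coefM; apply: eq_bigr => -[i /= hi] _.
  by rewrite psmul_t -?coef_t ?leq_subr.
rewrite coefM; apply: eq_bigr => -[i /= hi] _.
by rewrite -coef_t // psmul_t ?leq_subr.
Qed.

Lemma psderivM A B k :
  psderiv (psmul A B) k = psmul (psderiv A) B k + psmul A (psderiv B) k.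
Proof.
rewrite /psderiv (psmul_coefM _ _ (ltnSn k.+1)) mulr_natl -coef_deriv derivM coefD.
congr (_ + _); rewrite coefM; apply: eq_bigr => -[i /= hi] _;
  rewrite coef_deriv !coef_poly mulr_natl.
  by rewrite ltnS hi ltnS (leq_trans (leq_subr _ _)).
by rewrite ltnW // !ltnS leq_subr.
Qed.

Lemma psmul_sqr_deriv T P k : (forall i, psmul T T i = P i) ->
  2%:R * psmul P (psderiv T) k = psmul T (psderiv P) k.
Proof.
move=> TTP.
have TdT i : 2%:R * psmul T (psderiv T) i = psderiv P i.
  by rewrite /psderiv -TTP -/(psderiv _ i) psderivM psmulC mulr2n mulrDl mul1r.
rewrite (eq_psmul _ (fun i => esym (TTP i)) (frefl _)) psmulA -psmulZr.
exact: eq_psmul.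
Qed.

Lemma psmul_sqrS S k :
  psmul S S k.+1 = 2%:R * S 0%N * S k.+1 + \sum_(1 <= i < k.+1) S i * S (k.+1 - i)%N.
Proof.
by rewrite psmulE big_nat_recl // big_nat_recr //= subn0 subnn big_add1 /=; ring.
Qed.

Lemma ps_sqrt_unique S T : 2%:R != 0 :> R -> S 0%N = 1 -> T 0%N = 1 ->
  (forall k, psmul S S k = psmul T T k) -> S =1 T.
Proof.
move=> two_neq0 S0 T0 SSTT; elim/ltn_ind => -[|k] IH; first by rewrite S0 T0.
have := SSTT k.+1; rewrite !psmul_sqrS S0 T0.
rewrite (eq_big_nat _ _ (F2 := fun i => T i * T (k.+1 - i)%N)); last first.
  by move=> i /andP[i_gt0 ltik]; rewrite !IH //; lia.
by move/addIr; rewrite mulr1; apply: mulfI.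
Qed.

End PowerSeries.

Section GenusZero.
Variable R : fieldType.
Variables (s u v : R) (F : fps R).
Hypothesis s_neq0 : s != 0.

Lemma G01_succ m : G01 F m.+1 = m%:R * dp m F [::].
Proof. by case: m => [|m]; rewrite ?mul0r. Qed.

Lemma psmul_sqr_weighted (G : ps R) (b : nat -> R) n :
  G 0%N = 0 -> (forall m, G m.+1 = m%:R * b m) ->
  psmul G G n.+2 = \sum_(1 <= i < n) (i * (n - i))%:R * (b i * b (n - i)%N).
Proof.
move=> G0 GS; rewrite psmulE big_nat_recl // big_nat_recr //= subnn G0.
rewrite mul0r mulr0 add0r addr0.
case: n => [|n]; first by rewrite big_nat1 big_geq // GS mul0r mul0r.
rewrite big_nat_recl // big_nat_recr //= big_add1 /= !subSS subSnn !GS.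
rewrite !mul0r mulr0 add0r addr0; apply: eq_big_nat => i /andP[_ ltin].
by rewrite subSn; [rewrite !GS !subSS natrM; ring | lia].
Qed.

Hypothesis genus0 : forall n e, genus0_lhs s u v F n e = 0.

Lemma genus0_at_origin n :
  n.+1%:R * dp n.+1 F [::] = s * ((u + v) * n%:R * dp n F [::]
    + \sum_(1 <= i < n) (i * (n - i))%:R * (dp i F [::] * dp (n - i) F [::])
    + (if n == 0%N then u * v else 0)).
Proof.
have := genus0 n [::]; rewrite /genus0_lhs big_geq // addn1 /= andbT.
rewrite (eq_bigr (fun i => (i * (n - i))%:R * (dp i F [::] * dp (n - i) F [::]))).
  move=> e; apply/eqP; rewrite -subr_eq0; apply/eqP.
  by rewrite -[RHS](mulr0 (- s)) -[in RHS]e; field.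
by move=> i _; rewrite /fmul /= big_seq1.
Qed.

Lemma G01_quadratic k :
  G01 F k = s * u * v * (k == 2%N)%:R + s * (u + v) * psshift (G01 F) k
            + s * psmul (G01 F) (G01 F) k.
Proof.
case: k => [|[|n]].
- by rewrite psmulE big_nat1 /=; ring.
- by rewrite psmulE !big_nat_recl // big_geq //=; ring.
rewrite (psmul_sqr_weighted (b := fun m => dp m F [::])) // => [|m]; last exact: G01_succ.
have -> : psshift (G01 F) n.+2 = n%:R * dp n F [::] by exact: G01_succ.
by rewrite G01_succ genus0_at_origin; case: n => [|n] /=; ring.
Qed.

End GenusZero.

Section Narayana.
Variable R : fieldType.
Hypothesis charR0 : [pchar R] =i pred0.

Lemma natrS_neq0 n : (n.+1%:R : R) != 0.
Proof. by rewrite ((pcharf0P R).1 charR0). Qed.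

(* [narayana R n 0] is [1/n], not [0]: these variants vanish at [k = 0]. *)
Definition narayana_num (n k : nat) : R :=
  if k is k'.+1 then ('C(n, k'.+1) * 'C(n, k'))%:R else 0.
Definition narayana0 (n k : nat) : R := n%:R^-1 * narayana_num n k.

Lemma narayana_num_small n k : (n < k)%N -> narayana_num n k = 0.
Proof. by case: k => [//|k] ltnk; rewrite /narayana_num bin_small. Qed.

Lemma narayana0_small n k : (n < k)%N -> narayana0 n k = 0.
Proof. by move=> ltnk; rewrite /narayana0 narayana_num_small ?mulr0. Qed.

Lemma mulr_narayana0 n k : n%:R * narayana0 n k = narayana_num n k.
Proof.
case: n => [|n]; first by case: k => [|k]; rewrite /narayana0 /narayana_num ?bin0n ?mul0r.
by rewrite /narayana0 mulrA mulfV ?mul1r ?natrS_neq0.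
Qed.

Lemma bin_ratio n m :
  ('C(n, m.+1))%:R = (n.+1%:R / m.+1%:R - 1) * ('C(n, m))%:R :> R.
Proof.
have e : (n.+1 * 'C(n, m))%:R = (m.+1 * ('C(n, m.+1) + 'C(n, m)))%:R :> R.
  by rewrite -binS -mul_bin_diag.
rewrite !natrM natrD in e.
by rewrite mulrBl mul1r mulrAC e; field; rewrite nat1r natrS_neq0.
Qed.

Local Ltac natr_neq0 :=
  rewrite ?nat1r -?natrD; repeat (apply/andP; split);
  by rewrite ?((pcharf0P R).1 charR0) ?addn_eq0.

Lemma narayana0_rec n k :
  (n + 3)%:R * narayana0 n.+2 k =
  (2 * n + 3)%:R * (narayana0 n.+1 k + psshift (narayana0 n.+1) k)
  - (narayana_num n k - 2%:R * psshift (narayana_num n) k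
     + psshift (psshift (narayana_num n)) k).
Proof.
case: k => [|[|[|j]]]; rewrite /narayana0 /narayana_num /=.
- ring.
- rewrite !bin1 !bin0 !muln1; field; natr_neq0.
- rewrite !binS !bin0 !natrM !natrD (bin_ratio n 1) !bin1; field; natr_neq0.
- rewrite !binS !natrM !natrD (bin_ratio n j.+2) (bin_ratio n j.+1) (bin_ratio n j).
  by field; natr_neq0.
Qed.

Variables u v : R.

Definition homog (f : nat -> R) (d : nat) : R :=
  \sum_(0 <= k < d.+1) f k * u ^+ (d - k) * v ^+ k.

Lemma eq_homog f g d : f =1 g -> homog f d = homog g d.
Proof. by move=> efg; apply: eq_bigr => k _; rewrite efg. Qed.

Lemma homogB f g d : homog f d - homog g d = homog (fun k => f k - g k) d.
Proof. by rewrite /homog -sumrB; apply: eq_bigr => k _; ring. Qed.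

Lemma homogZ a f d : a * homog f d = homog (fun k => a * f k) d.
Proof. by rewrite /homog mulr_sumr; apply: eq_bigr => k _; ring. Qed.

Lemma mulr_homog_u f d : f d.+1 = 0 -> u * homog f d = homog f d.+1.
Proof.
move=> fd; rewrite /homog mulr_sumr [RHS]big_nat_recr //= fd mul0r mul0r addr0.
by apply: eq_big_nat => k /andP[_ lekd]; rewrite subSn // exprS; ring.
Qed.

Lemma mulr_homog_v f d : v * homog f d = homog (psshift f) d.+1.
Proof.
rewrite /homog mulr_sumr [RHS]big_nat_recl //= mul0r mul0r add0r.
by apply: eq_bigr => k _; rewrite subSS exprS; ring.
Qed.

Lemma mulr_homog_upv f d :
  f d.+1 = 0 -> (u + v) * homog f d = homog (fun k => f k + psshift f k) d.+1.
Proof.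
move=> fd; rewrite mulrDl mulr_homog_u // mulr_homog_v /homog -big_split.
by apply: eq_bigr => k _; rewrite /= -!mulrDl.
Qed.

Lemma mulr_homog_umv f d :
  f d.+1 = 0 -> (u - v) * homog f d = homog (fun k => f k - psshift f k) d.+1.
Proof. by move=> fd; rewrite mulrBl mulr_homog_u // mulr_homog_v homogB. Qed.

Definition narayana_form (n : nat) : R :=
  \sum_(1 <= k < n.+1) narayana R n k * u ^+ (n + 1 - k) * v ^+ k.

Lemma narayana_form_homog n : narayana_form n = homog (narayana0 n) n.+1.
Proof.
rewrite /narayana_form big_add1 /homog [RHS]big_nat_recl // [in RHS]big_nat_recr //=.
have -> : narayana0 n 0 = 0 by rewrite /narayana0 mulr0.
rewrite (narayana0_small (ltnSn n)) !mul0r add0r addr0.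
by apply: eq_big_nat => k _; rewrite addn1.
Qed.

Lemma narayana_form_rec n :
  (n + 3)%:R * narayana_form n.+2 =
  (2 * n + 3)%:R * (u + v) * narayana_form n.+1
  - n%:R * (u - v) ^+ 2 * narayana_form n.
Proof.
rewrite !narayana_form_homog.
transitivity ((2 * n + 3)%:R * ((u + v) * homog (narayana0 n.+1) n.+2)
  - (u - v) * ((u - v) * (n%:R * homog (narayana0 n) n.+1))); last by ring.
rewrite mulr_homog_upv ?narayana0_small // [n%:R * _]homogZ.
rewrite (eq_homog _ (mulr_narayana0 n)).
rewrite mulr_homog_umv ?narayana_num_small // mulr_homog_umv; last first.
  by rewrite /= !bin_small ?subrr //; lia.
rewrite !homogZ homogB; apply: eq_homog => k; rewrite narayana0_rec.
by case: k => [|k] /=; ring.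
Qed.

Lemma narayana_form_poly n :
  u != 0 -> narayana_form n = u ^+ n.+1 * narayana_poly n (v / u).
Proof.
move=> u_neq0; rewrite /narayana_form /narayana_poly mulr_sumr.
apply: eq_big_nat => k /andP[_ lekn].
have -> : u ^+ n.+1 = u ^+ (n + 1 - k) * u ^+ k.
  by rewrite -exprD subnK ?addn1 // ltnW.
by rewrite exprMn exprVn; field; rewrite expf_neq0.
Qed.

End Narayana.

Section OnePointFunction.
Variable R : fieldType.
Hypothesis charR0 : [pchar R] =i pred0.
Variables (s u v : R) (G : ps R).
Hypothesis s_neq0 : s != 0.
Hypothesis G0 : G 0%N = 0.
Hypothesis G1 : G 1%N = 0.
Hypothesis G_quadratic : forall k,
  G k = s * u * v * (k == 2%N)%:R + s * (u + v) * psshift G k + s * psmul G G k.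

Lemma two_neq0 : 2%:R != 0 :> R.
Proof. exact: natrS_neq0. Qed.

Definition radicand : ps R := fun k =>
  (k == 0%N)%:R - 2%:R * s * (u + v) * (k == 1%N)%:R
  + s ^+ 2 * (u - v) ^+ 2 * (k == 2%N)%:R.

Lemma radicand_quad :
  radicand =1 psquad 1 (- (2%:R * s * (u + v))) (s ^+ 2 * (u - v) ^+ 2).
Proof. by move=> k; rewrite /radicand /psquad /psXn; ring. Qed.

Definition sqrt_radicand : ps R :=
  fun k => psquad 1 (- (s * (u + v))) 0 k + (- (2%:R * s)) * G k.

Lemma sqr_sqrt_radicand k : psmul sqrt_radicand sqrt_radicand k = radicand k.
Proof.
have GG : psmul G G k =
    s^-1 * (G k - s * u * v * (k == 2%N)%:R - s * (u + v) * psshift G k).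
  by rewrite [in RHS]G_quadratic; field.
rewrite psmulDl psmulZl psmul_quadl psmulC psmulDl psmulZl psmul_quadl {}GG.
by case: k => [|[|[|k]]]; rewrite /sqrt_radicand /radicand /psquad /psXn /= ?G0 ?G1;
  field.
Qed.

Lemma G_sqrt S : S 0%N = 1 -> (forall k, psmul S S k = radicand k) ->
  forall k, G k = (2%:R * s)^-1 * ((k == 0%N)%:R - s * (u + v) * (k == 1%N)%:R - S k).
Proof.
move=> S0 SS k.
have -> : S k = sqrt_radicand k.
  apply: (ps_sqrt_unique two_neq0 S0) => [|i]; last by rewrite SS sqr_sqrt_radicand.
  by rewrite /sqrt_radicand /psquad /psXn /= G0; ring.
by rewrite /sqrt_radicand /psquad /psXn; field; rewrite s_neq0 two_neq0.
Qed.

Lemma G_rec j :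
  j.+3%:R * G j.+3 = (2 * j + 3)%:R * (s * (u + v)) * G j.+2
                     - j%:R * (s ^+ 2 * (u - v) ^+ 2) * G j.+1.
Proof.
have dP : psderiv radicand =1
    psquad (- (2%:R * s * (u + v))) ((s ^+ 2 * (u - v) ^+ 2) *+ 2) 0.
  by move=> i; rewrite -(psderiv_quad 1) /psderiv radicand_quad.
have := psmul_sqr_deriv j.+2 sqr_sqrt_radicand.
rewrite (eq_psmul _ radicand_quad (frefl _)) (eq_psmul _ (frefl _) dP).
rewrite [psmul sqrt_radicand _ _]psmulC !psmul_quadl.
rewrite /psshift /psderiv /sqrt_radicand /psquad /psXn /=.
(* the two sides of [2 P T' = P' T] differ by [-4 s] times the recurrence *)
case: j => [|j] /=; rewrite ?G1 => /eqP; rewrite -subr_eq0 => /eqP e;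
  apply/eqP; rewrite -subr_eq0; apply/eqP;
  rewrite -[RHS](mulr0 (- (4%:R * s))^-1) -[in RHS]e;
  by field; rewrite oppr_eq0 mulf_neq0 ?s_neq0 ?(natrS_neq0 charR0 3).
Qed.

Lemma G_narayana n : G n.+1 = s ^+ n * narayana_form u v n.
Proof.
suff G_succ2 : G n.+1 = s ^+ n * narayana_form u v n /\
    G n.+2 = s ^+ n.+1 * narayana_form u v n.+1 by case: G_succ2.
elim: n => [|n [IH1 IH2]].
  split; first by rewrite G1 /narayana_form big_geq ?mulr0.
  rewrite G_quadratic psmulE !big_nat_recl // big_geq // G0 G1 /narayana_form.
  by rewrite big_nat1 /narayana /= bin1 bin0 G1 invr1 addnK; ring.
split; first exact: IH2.
apply: (mulfI (natrS_neq0 charR0 n.+2)).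
rewrite G_rec IH1 IH2 -[n.+3]addn3 [RHS]mulrCA (narayana_form_rec charR0).
by rewrite !exprS; ring.
Qed.

End OnePointFunction.

Theorem mainTheorem1 (R : fieldType) (hchar : [pchar R] =i pred0)
  (s u v : R) (hs : s != 0) (F0 : fps R) (hF : genus0_free_energy s u v F0) :
  let G := G01 F0 in
  (* G = s u v / x^2 + s (u+v)/x G + s G^2 *)
  (forall k : nat,
     G k = s * u * v * (k == 2%N)%:R
           + s * (u + v) * (if k is k'.+1 then G k' else 0)
           + s * psmul G G k)
  /\
  (* G = (1/(2s)) (1 - s(u+v)/x - sqrt(1 - 2s(u+v)/x + s^2(u-v)^2/x^2)),
     sqrt = the series in 1/x with constant term 1 squaring to the radicand *)
  (forall S : ps R,
     S 0%N = 1 ->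
     (forall k : nat, psmul S S k =
        (k == 0%N)%:R - 2%:R * s * (u + v) * (k == 1%N)%:R
        + s ^+ 2 * (u - v) ^+ 2 * (k == 2%N)%:R) ->
     forall k : nat,
       G k = (2%:R * s)^-1 * ((k == 0%N)%:R - s * (u + v) * (k == 1%N)%:R - S k))
  /\
  (* explicit Narayana form: coefficient of x^{-n-1} *)
  G 0%N = 0 /\ G 1%N = 0 /\
  (forall n : nat, (1 <= n)%N ->
     G n.+1 = s ^+ n * \sum_(1 <= k < n.+1)
                 narayana R n k * u ^+ (n + 1 - k) * v ^+ k)
  /\
  (u != 0 -> forall n : nat, (1 <= n)%N ->
     G n.+1 = s ^+ n * u ^+ n.+1 * narayana_poly n (v / u)).
Proof.
move=> G; rewrite {}/G; have [_ genus0] := hF.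
have G_quadratic := G01_quadratic hs genus0.
have G0 : G01 F0 0%N = 0 by [].
have G1 : G01 F0 1%N = 0 by [].
have G_nar := G_narayana hchar hs G0 G1 G_quadratic.
split; first exact: G_quadratic.
split.
  by move=> S S0 SS; apply: (G_sqrt hchar hs G0 G1 G_quadratic S0 SS).
do 2 (split; first by []).
split=> [n _ | u_neq0 n _]; rewrite G_nar //.
by rewrite narayana_form_poly // mulrA.
Qed.
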